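(* With $I_i'$ ($i=1,\dots,M$) as follows: base stations $\mathcal{M}=\{1,\dots,M\}$, test points $\mathcal{N}=\{1,\dots,N\}$, $d_j>0$, $X=(x_{i,j})\in\{0,1\}^{M\times N}$ with every row containing at least one $1$, $g_{i,j}\ge0$ with $g_{i,j}>0$ whenever $x_{i,j}=1$, $P_i>0$, $\sigma^2>0$, $K,B,\eta,\bar\omega>0$, $\omega_{i,j}(\boldsymbol{\rho})=B\log_2\!\big(1+\frac{P_i g_{i,j}}{\eta(\sum_{l\ne i}P_l g_{l,j}\rho_l+\sigma^2)}\big)$ and $I_i'(\boldsymbol{\rho})=\sum_{j:\,x_{i,j}=1}\max\{d_j/(K\omega_{i,j}(\boldsymbol{\rho})),\,d_j/(K\bar\omega)\}$, define $I_i''(\boldsymbol{\rho})=\min\{I_i'(\boldsymbol{\rho}),1\}$ and $\mathcal{J}''=[I_1'',\dots,I_M'']^T:\mathbb{R}_+^M\to\mathbb{R}_{++}^M$. Then $\mathcal{J}''$ is a standard interference mapping satisfying $\mathcal{J}''(\boldsymbol{\rho})\le\mathbf{1}$ for all $\boldsymbol{\rho}\in\mathbb{R}_+^M$, and $\mathcal{J}''$ has a unique fixed point $\boldsymbol{\rho}^\star\in\mathbb{R}_+^M$ (i.e. $\boldsymbol{\rho}^\star=\mathcal{J}''(\boldsymbol{\rho}^\star)$), which lies in $(0,1]^M$.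
   Context: $\mathbb{R}_+$ denotes the nonnegative reals and $\mathbb{R}_{++}$ the strictly positive reals; $\mathbf{1}$ is the all-ones vector; vector inequalities are componentwise. A function $I:\mathbb{R}_+^M\to\mathbb{R}_{++}$ is called a standard interference function if it satisfies scalability ($\alpha I(\mathbf{x})>I(\alpha\mathbf{x})$ for all $\mathbf{x}\in\mathbb{R}_+^M$, $\alpha>1$) and monotonicity ($I(\mathbf{x}_1)\ge I(\mathbf{x}_2)$ whenever $\mathbf{x}_1\ge\mathbf{x}_2$). A standard interference mapping is a map $\mathbf{x}\mapsto[I_1(\mathbf{x}),\dots,I_M(\mathbf{x})]^T$ with each $I_i$ a standard interference function. *)

From Stdlib Require Import Reals Lra.
Open Scope R_scope.

(* Vectors in R^M are functions nat -> R, only indices 0..M-1 matter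
   (base station i of the paper is index i-1; test point j is index j-1). *)

Fixpoint rsum (n : nat) (f : nat -> R) : R :=
  match n with
  | O => 0
  | S k => rsum k f + f k
  end.

Definition log2 (a : R) : R := ln a / ln 2.

Definition omega (M : nat) (B eta sigma2 : R) (P : nat -> R) (g : nat -> nat -> R)
  (i j : nat) (rho : nat -> R) : R :=
  B * log2 (1 + P i * g i j /
    (eta * (rsum M (fun l => if Nat.eq_dec l i then 0 else P l * g l j * rho l) + sigma2))).

Definition Iprime (M N : nat) (d : nat -> R) (x : nat -> nat -> bool)
  (g : nat -> nat -> R) (P : nat -> R) (sigma2 K B eta wbar : R)
  (i : nat) (rho : nat -> R) : R :=
  rsum N (fun j => if x i j
                   then Rmax (d j / (K * omega M B eta sigma2 P g i j rho)) (d j / (K * wbar))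
                   else 0).

Definition Isecond (M N : nat) (d : nat -> R) (x : nat -> nat -> bool)
  (g : nat -> nat -> R) (P : nat -> R) (sigma2 K B eta wbar : R)
  (i : nat) (rho : nat -> R) : R :=
  Rmin (Iprime M N d x g P sigma2 K B eta wbar i rho) 1.

Definition nonneg_vec (M : nat) (rho : nat -> R) : Prop :=
  forall l, (l < M)%nat -> 0 <= rho l.

Definition vec_le (M : nat) (r1 r2 : nat -> R) : Prop :=
  forall l, (l < M)%nat -> r1 l <= r2 l.

Definition standard_interference_function (M : nat) (I : (nat -> R) -> R) : Prop :=
  (forall rho, nonneg_vec M rho -> 0 < I rho) /\
  (forall rho alpha, nonneg_vec M rho -> 1 < alpha ->
     I (fun l => alpha * rho l) < alpha * I rho) /\
  (forall r1 r2, nonneg_vec M r1 -> nonneg_vec M r2 -> vec_le M r2 r1 ->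
     I r2 <= I r1).

(* Every summand of I'_i is a nonincreasing function of the rate w_{i,j},
   and w_{i,j} is a nonincreasing function of the load through the
   interference term, which is linear in rho.  Strict concavity of
   t |-> ln (1 + t) gives a * w_{i,j}(a rho) > w_{i,j}(rho) for a > 1, which
   is scalability; positivity comes from the d_j/(K wbar) floor.  Capping at 1
   keeps the mapping standard and makes it a monotone self-map of the box
   [0,1]^M, so the supremum of its post-fixed points is a fixed point
   (Knaster-Tarski).  Uniqueness is Yates' argument: scale one fixed point
   until it touches another from above and apply scalability at the
   touching coordinate. *)

From Stdlib Require Import Reals Lra Lia.
Open Scope R_scope.

Lemma ln_le (a b : R) : 0 < a -> a <= b -> ln a <= ln b.
Proof.
  intros Ha [Hab | <-]; [left; apply ln_increasing |]; lra.
Qed.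

Lemma ln_lt_sub1 (y : R) : 1 < y -> ln y < y - 1.
Proof.
  intro Hy.
  assert (Hln : ln y <> 0) by (apply ln_neq_0; lra).
  pose proof (exp_ineq1 _ Hln) as Hexp.
  rewrite exp_ln in Hexp by lra. lra.
Qed.

Lemma one_sub_inv_le_ln (y : R) : 0 < y -> 1 - / y <= ln y.
Proof.
  intro Hy. pose proof (exp_ineq1_le (ln (/ y))) as Hexp.
  rewrite exp_ln, ln_Rinv in Hexp by (try apply Rinv_0_lt_compat; lra). lra.
Qed.

Lemma ln1p_lt_scaled (t a : R) : 0 < t -> 1 < a -> ln (1 + t) < a * ln (1 + t / a).
Proof.
  intros Ht Ha. set (z := t / a).
  assert (Hz : 0 < z) by (apply Rdiv_lt_0_compat; lra).
  assert (Htz : t = a * z) by (unfold z; field; lra).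
  assert (Hsplit : ln (1 + t) = ln (1 + z) + ln ((1 + t) / (1 + z))).
  { rewrite <- ln_mult by (try apply Rdiv_lt_0_compat; lra). f_equal. field. lra. }
  assert (Hquot : (1 + t) / (1 + z) - 1 = (a - 1) * (1 - / (1 + z)))
    by (rewrite Htz; field; lra).
  assert (Hgt1 : 1 < (1 + t) / (1 + z)).
  { apply (Rmult_lt_reg_r (1 + z)); [lra |].
    unfold Rdiv. rewrite Rmult_assoc, Rinv_l by lra. nra. }
  pose proof (ln_lt_sub1 _ Hgt1).
  pose proof (one_sub_inv_le_ln (1 + z) ltac:(lra)).
  nra.
Qed.

Lemma ln_rate_lt_scaled (c e s0 s a : R) :
  0 < c -> 0 < e -> 0 < s0 -> 0 <= s -> 1 < a ->
  ln (1 + c / (e * (s + s0))) < a * ln (1 + c / (e * (a * s + s0))).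
Proof.
  intros Hc He Hs0 Hs Ha.
  set (t := c / (e * (s + s0))).
  assert (Ht : 0 < t) by (apply Rdiv_lt_0_compat; nra).
  assert (Hta : t / a <= c / (e * (a * s + s0))).
  { unfold t, Rdiv. rewrite Rmult_assoc, <- Rinv_mult.
    apply Rmult_le_compat_l; [lra |].
    assert (0 < e * s0) by nra. assert (0 <= a * s) by nra.
    apply Rinv_le_contravar; nra. }
  assert (Hta_pos : 0 < t / a) by (apply Rdiv_lt_0_compat; lra).
  apply Rlt_le_trans with (a * ln (1 + t / a)); [now apply ln1p_lt_scaled |].
  apply Rmult_le_compat_l; [lra |]. apply ln_le; lra.
Qed.

Lemma Rmax_quot_lt_scaled (c u w w' a : R) :
  0 < c -> 0 < u -> 0 < w -> 0 < w' -> 1 < a -> w < a * w' ->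
  Rmax (c / w') (c / u) < a * Rmax (c / w) (c / u).
Proof.
  intros Hc Hu Hw Hw' Ha Hww'.
  rewrite <- RmaxRmult by lra.
  assert (Hfirst : c / w' < a * (c / w)).
  { apply (Rmult_lt_reg_r (w * w')); [nra |].
    replace (c / w' * (w * w')) with (c * w) by (field; lra).
    replace (a * (c / w) * (w * w')) with (c * (a * w')) by (field; lra).
    nra. }
  assert (Hsecond : c / u < a * (c / u)).
  { assert (0 < c / u) by (apply Rdiv_lt_0_compat; lra). nra. }
  apply Rmax_lub_lt.
  - apply Rlt_le_trans with (a * (c / w)); [assumption | apply Rmax_l].
  - apply Rlt_le_trans with (a * (c / u)); [assumption | apply Rmax_r].
Qed.

Lemma rsum_ext (n : nat) (f h : nat -> R) :
  (forall k, (k < n)%nat -> f k = h k) -> rsum n f = rsum n h.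
Proof.
  induction n as [| n IH]; intros Hfh; simpl; [reflexivity |].
  rewrite IH by (intros; apply Hfh; lia). now rewrite Hfh by lia.
Qed.

Lemma rsum_le (n : nat) (f h : nat -> R) :
  (forall k, (k < n)%nat -> f k <= h k) -> rsum n f <= rsum n h.
Proof.
  induction n as [| n IH]; intros Hfh; simpl; [lra |].
  pose proof (Hfh n ltac:(lia)). pose proof (IH ltac:(intros; apply Hfh; lia)). lra.
Qed.

Lemma rsum_lt (n : nat) (f h : nat -> R) :
  (forall k, (k < n)%nat -> f k <= h k) ->
  (exists k, (k < n)%nat /\ f k < h k) -> rsum n f < rsum n h.
Proof.
  induction n as [| n IH]; intros Hfh [k [Hk Hlt]]; simpl; [lia |].
  destruct (Nat.eq_dec k n) as [-> | Hkn].
  - pose proof (rsum_le n f h ltac:(intros; apply Hfh; lia)). lra.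
  - pose proof (IH ltac:(intros; apply Hfh; lia) ltac:(exists k; split; [lia | assumption])).
    pose proof (Hfh n ltac:(lia)). lra.
Qed.

Lemma rsum_const0 (n : nat) : rsum n (fun _ => 0) = 0.
Proof. induction n as [| n IH]; simpl; [| rewrite IH]; ring. Qed.

Lemma rsum_nonneg (n : nat) (f : nat -> R) :
  (forall k, (k < n)%nat -> 0 <= f k) -> 0 <= rsum n f.
Proof. intros Hf. rewrite <- (rsum_const0 n). now apply rsum_le. Qed.

Lemma rsum_scal (n : nat) (a : R) (f : nat -> R) :
  rsum n (fun k => a * f k) = a * rsum n f.
Proof. induction n as [| n IH]; simpl; [| rewrite IH]; ring. Qed.

Lemma exists_argmax (n : nat) (f : nat -> R) :
  (0 < n)%nat -> exists k, (k < n)%nat /\ forall m, (m < n)%nat -> f m <= f k.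
Proof.
  induction n as [| n IH]; intros Hn; [lia |].
  destruct (Nat.eq_dec n 0) as [-> | Hn0].
  - exists 0%nat. split; [lia |]. intros m Hm. replace m with 0%nat by lia. lra.
  - destruct (IH ltac:(lia)) as [k [Hk Hmax]].
    destruct (Rle_or_lt (f n) (f k)) as [Hle | Hlt].
    + exists k. split; [lia |]. intros m Hm.
      destruct (Nat.eq_dec m n) as [-> | ]; [assumption | apply Hmax; lia].
    + exists n. split; [lia |]. intros m Hm.
      destruct (Nat.eq_dec m n) as [-> | ]; [lra |].
      pose proof (Hmax m ltac:(lia)). lra.
Qed.

Lemma standard_interference_Rmin (M : nat) (I : (nat -> R) -> R) (c : R) :
  0 < c -> standard_interference_function M I ->
  standard_interference_function M (fun rho => Rmin (I rho) c).
Proof.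
  intros Hc [Hpos [Hscal Hmono]]. split; [| split].
  - intros rho Hrho. apply Rmin_glb_lt; auto.
  - intros rho a Hrho Ha.
    destruct (Rle_or_lt c (I rho)) as [Hcap | Huncap].
    + rewrite (Rmin_right (I rho)) by lra.
      pose proof (Rmin_r (I (fun l => a * rho l)) c). nra.
    + rewrite (Rmin_left (I rho)) by lra.
      pose proof (Rmin_l (I (fun l => a * rho l)) c). pose proof (Hscal rho a Hrho Ha). lra.
  - intros r1 r2 H1 H2 Hle. apply Rle_min_compat_r. auto.
Qed.

Section StandardFixpoint.

Variables (M : nat) (J : nat -> (nat -> R) -> R).

Hypothesis J_standard : forall i, (i < M)%nat -> standard_interference_function M (J i).

Definition is_fixpoint (rho : nat -> R) : Prop :=
  nonneg_vec M rho /\ forall i, (i < M)%nat -> rho i = J i rho.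

Lemma fixpoint_le (r r' : nat -> R) :
  is_fixpoint r -> is_fixpoint r' -> vec_le M r' r.
Proof.
  intros [Hr Fr] [Hr' Fr'] l Hl.
  destruct (Rle_or_lt (r' l) (r l)) as [| Hlt]; [assumption | exfalso].
  assert (Hpos : forall m, (m < M)%nat -> 0 < r m).
  { intros m Hm. rewrite Fr by assumption. now apply J_standard. }
  destruct (exists_argmax M (fun m => r' m / r m) ltac:(lia)) as [k [Hk Hmax]].
  set (a := r' k / r k).
  assert (Ha : 1 < a).
  { pose proof (Hmax l Hl). pose proof (Hpos l Hl).
    assert (1 < r' l / r l); [| unfold a; lra].
    apply (Rmult_lt_reg_r (r l)); [assumption |].
    unfold Rdiv. rewrite Rmult_assoc, Rinv_l; lra. }
  assert (Hbelow : vec_le M r' (fun m => a * r m)).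
  { intros m Hm. pose proof (Hmax m Hm). pose proof (Hpos m Hm).
    replace (r' m) with (r' m / r m * r m) by (field; lra).
    apply Rmult_le_compat_r; unfold a; lra. }
  assert (Hscaled_nn : nonneg_vec M (fun m => a * r m)).
  { intros m Hm. pose proof (Hpos m Hm). apply Rmult_le_pos; lra. }
  destruct (J_standard k Hk) as [_ [Hscal Hmono]].
  pose proof (Hmono _ _ Hscaled_nn Hr' Hbelow) as Hup.
  pose proof (Hscal r a Hr Ha) as Hdown.
  rewrite <- Fr' in Hup by assumption. rewrite <- Fr in Hdown by assumption.
  assert (a * r k = r' k) by (unfold a; pose proof (Hpos k Hk); field; lra).
  lra.
Qed.

Lemma fixpoint_unique (r r' : nat -> R) :
  is_fixpoint r -> is_fixpoint r' -> forall i, (i < M)%nat -> r' i = r i.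
Proof.
  intros Hr Hr' i Hi. apply Rle_antisym; now apply fixpoint_le.
Qed.

End StandardFixpoint.

Lemma monotone_box_fixpoint (M : nat) (J : nat -> (nat -> R) -> R) (b : R) :
  (forall i, (i < M)%nat -> forall r1 r2, nonneg_vec M r1 -> nonneg_vec M r2 ->
     vec_le M r2 r1 -> J i r2 <= J i r1) ->
  (forall i rho, 0 <= J i rho <= b) ->
  exists rs, (forall l, 0 <= rs l <= b) /\ forall i, (i < M)%nat -> rs i = J i rs.
Proof.
  intros Hmono Hbound.
  set (post := fun rho : nat -> R =>
    (forall l, 0 <= rho l <= b) /\ forall l, (l < M)%nat -> rho l <= J l rho).
  set (coord := fun l v => exists rho, post rho /\ v = rho l).
  assert (post0 : post (fun _ => 0)).
  { split; [intros; pose proof (Hbound 0%nat (fun _ => 0)); lra | intros l _; apply Hbound]. }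
  assert (coord_bound : forall l, bound (coord l)).
  { intros l. exists b. intros v [rho [[Hbox _] ->]]. apply Hbox. }
  assert (coord_inhabited : forall l, exists v, coord l v)
    by (intros l; exists 0, (fun _ => 0); auto).
  set (rs := fun l => proj1_sig (completeness _ (coord_bound l) (coord_inhabited l))).
  assert (rs_lub : forall l, is_lub (coord l) (rs l))
    by (intros l; unfold rs; apply proj2_sig).
  assert (post_le_rs : forall rho, post rho -> forall l, rho l <= rs l)
    by (intros rho Hpost l; apply (proj1 (rs_lub l)); now exists rho).
  assert (rs_box : forall l, 0 <= rs l <= b).
  { intros l. split; [apply (post_le_rs _ post0 l) |].
    apply (proj2 (rs_lub l)). intros v [rho [[Hbox _] ->]]. apply Hbox. }
  assert (box_nonneg : forall rho, (forall l, 0 <= rho l <= b) -> nonneg_vec M rho)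
    by (intros rho Hbox l _; apply Hbox).
  assert (rs_post : forall l, (l < M)%nat -> rs l <= J l rs).
  { intros l Hl. apply (proj2 (rs_lub l)). intros v [rho [[Hbox Hpost] ->]].
    apply Rle_trans with (J l rho); [now apply Hpost |].
    apply Hmono; auto. intros m _. now apply post_le_rs. }
  assert (Jrs_post : post (fun l => J l rs)).
  { split; [intros l; apply Hbound |].
    intros l Hl. apply Hmono; auto. }
  exists rs. split; [assumption |].
  intros i Hi. apply Rle_antisym; [now apply rs_post | apply (post_le_rs _ Jrs_post i)].
Qed.

Definition cochannel_interference (M : nat) (P : nat -> R) (g : nat -> nat -> R)
  (i j : nat) (rho : nat -> R) : R :=
  rsum M (fun l => if Nat.eq_dec l i then 0 else P l * g l j * rho l).

Section LoadCoupling.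

Context {M N : nat} {d : nat -> R} {x : nat -> nat -> bool}
  {g : nat -> nat -> R} {P : nat -> R} {sigma2 K B eta wbar : R}.

Hypothesis Hd : forall j, (j < N)%nat -> 0 < d j.
Hypothesis Hx : forall i, (i < M)%nat -> exists j, (j < N)%nat /\ x i j = true.
Hypothesis Hg : forall i j, (i < M)%nat -> (j < N)%nat -> 0 <= g i j.
Hypothesis Hgx : forall i j, (i < M)%nat -> (j < N)%nat -> x i j = true -> 0 < g i j.
Hypothesis HP : forall i, (i < M)%nat -> 0 < P i.
Hypothesis Hsigma2 : 0 < sigma2.
Hypothesis HK : 0 < K.
Hypothesis HB : 0 < B.
Hypothesis Heta : 0 < eta.
Hypothesis Hwbar : 0 < wbar.

Local Notation S := (cochannel_interference M P g).
Local Notation w := (omega M B eta sigma2 P g).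
Local Notation I' := (Iprime M N d x g P sigma2 K B eta wbar).

Lemma omega_ln (i j : nat) (rho : nat -> R) :
  w i j rho = B / ln 2 * ln (1 + P i * g i j / (eta * (S i j rho + sigma2))).
Proof. unfold omega, log2, cochannel_interference, Rdiv. ring. Qed.

Lemma cochannel_interference_nonneg (i j : nat) (rho : nat -> R) :
  (j < N)%nat -> nonneg_vec M rho -> 0 <= S i j rho.
Proof.
  intros Hj Hrho. apply rsum_nonneg. intros l Hl.
  destruct (Nat.eq_dec l i); [lra |].
  pose proof (HP l Hl). pose proof (Hg l j Hl Hj). pose proof (Hrho l Hl).
  apply Rmult_le_pos; [apply Rmult_le_pos |]; lra.
Qed.

Lemma cochannel_interference_le (i j : nat) (r1 r2 : nat -> R) :
  (j < N)%nat -> vec_le M r2 r1 -> S i j r2 <= S i j r1.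
Proof.
  intros Hj Hle. apply rsum_le. intros l Hl.
  destruct (Nat.eq_dec l i); [lra |].
  pose proof (HP l Hl). pose proof (Hg l j Hl Hj). pose proof (Hle l Hl).
  apply Rmult_le_compat_l; [apply Rmult_le_pos |]; lra.
Qed.

Lemma cochannel_interference_scal (i j : nat) (rho : nat -> R) (a : R) :
  S i j (fun l => a * rho l) = a * S i j rho.
Proof.
  unfold cochannel_interference. rewrite <- rsum_scal.
  apply rsum_ext. intros l _. destruct (Nat.eq_dec l i); ring.
Qed.

Lemma omega_pos (i j : nat) (rho : nat -> R) :
  (i < M)%nat -> (j < N)%nat -> x i j = true -> nonneg_vec M rho -> 0 < w i j rho.
Proof.
  intros Hi Hj Hxij Hrho. rewrite omega_ln.
  pose proof (cochannel_interference_nonneg i j rho Hj Hrho).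
  pose proof (HP i Hi). pose proof (Hgx i j Hi Hj Hxij). pose proof ln_lt_2.
  assert (0 < P i * g i j / (eta * (S i j rho + sigma2)))
    by (apply Rdiv_lt_0_compat; nra).
  apply Rmult_lt_0_compat; [apply Rdiv_lt_0_compat; lra |].
  rewrite <- ln_1. apply ln_increasing; lra.
Qed.

Lemma omega_antitone (i j : nat) (r1 r2 : nat -> R) :
  (i < M)%nat -> (j < N)%nat -> x i j = true ->
  nonneg_vec M r1 -> nonneg_vec M r2 -> vec_le M r2 r1 -> w i j r1 <= w i j r2.
Proof.
  intros Hi Hj Hxij H1 H2 Hle. rewrite !omega_ln.
  pose proof (cochannel_interference_nonneg i j r1 Hj H1).
  pose proof (cochannel_interference_nonneg i j r2 Hj H2).
  pose proof (cochannel_interference_le i j r1 r2 Hj Hle).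
  pose proof (HP i Hi). pose proof (Hgx i j Hi Hj Hxij). pose proof ln_lt_2.
  apply Rmult_le_compat_l; [left; apply Rdiv_lt_0_compat; lra |].
  assert (0 < P i * g i j / (eta * (S i j r1 + sigma2)))
    by (apply Rdiv_lt_0_compat; nra).
  apply ln_le; [lra |].
  apply Rplus_le_compat_l. unfold Rdiv. apply Rmult_le_compat_l; [nra |].
  apply Rinv_le_contravar; nra.
Qed.

Lemma omega_lt_scaled (i j : nat) (rho : nat -> R) (a : R) :
  (i < M)%nat -> (j < N)%nat -> x i j = true -> nonneg_vec M rho -> 1 < a ->
  w i j rho < a * w i j (fun l => a * rho l).
Proof.
  intros Hi Hj Hxij Hrho Ha. rewrite !omega_ln, cochannel_interference_scal.
  pose proof (cochannel_interference_nonneg i j rho Hj Hrho).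
  pose proof (HP i Hi). pose proof (Hgx i j Hi Hj Hxij). pose proof ln_lt_2.
  pose proof (ln_rate_lt_scaled (P i * g i j) eta sigma2 (S i j rho) a
                ltac:(nra) Heta Hsigma2 ltac:(assumption) Ha).
  assert (0 < B / ln 2) by (apply Rdiv_lt_0_compat; lra).
  nra.
Qed.

Local Notation link_load i j rho := (Rmax (d j / (K * w i j rho)) (d j / (K * wbar))).

Lemma link_load_pos (i j : nat) (rho : nat -> R) : (j < N)%nat -> 0 < link_load i j rho.
Proof.
  intros Hj. apply Rlt_le_trans with (d j / (K * wbar)); [| apply Rmax_r].
  apply Rdiv_lt_0_compat; [apply Hd; assumption | nra].
Qed.

Lemma link_load_le (i j : nat) (r1 r2 : nat -> R) :
  (i < M)%nat -> (j < N)%nat -> x i j = true ->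
  nonneg_vec M r1 -> nonneg_vec M r2 -> vec_le M r2 r1 ->
  link_load i j r2 <= link_load i j r1.
Proof.
  intros Hi Hj Hxij H1 H2 Hle. apply Rle_max_compat_r.
  pose proof (omega_pos i j r1 Hi Hj Hxij H1).
  pose proof (omega_antitone i j r1 r2 Hi Hj Hxij H1 H2 Hle).
  unfold Rdiv. apply Rmult_le_compat_l; [left; now apply Hd |].
  apply Rinv_le_contravar; nra.
Qed.

Lemma link_load_lt_scaled (i j : nat) (rho : nat -> R) (a : R) :
  (i < M)%nat -> (j < N)%nat -> x i j = true -> nonneg_vec M rho -> 1 < a ->
  link_load i j (fun l => a * rho l) < a * link_load i j rho.
Proof.
  intros Hi Hj Hxij Hrho Ha.
  assert (Hscaled : nonneg_vec M (fun l => a * rho l))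
    by (intros l Hl; pose proof (Hrho l Hl); nra).
  pose proof (omega_pos i j rho Hi Hj Hxij Hrho).
  pose proof (omega_pos i j _ Hi Hj Hxij Hscaled).
  pose proof (omega_lt_scaled i j rho a Hi Hj Hxij Hrho Ha).
  apply Rmax_quot_lt_scaled; try nra. now apply Hd.
Qed.

Lemma Iprime_nonneg (i : nat) (rho : nat -> R) : 0 <= I' i rho.
Proof.
  apply rsum_nonneg. intros j Hj.
  destruct (x i j); [left; now apply link_load_pos | lra].
Qed.

Lemma Iprime_standard (i : nat) : (i < M)%nat -> standard_interference_function M (I' i).
Proof.
  intros Hi. destruct (Hx i Hi) as [j0 [Hj0 Hxij0]]. split; [| split].
  - intros rho _. rewrite <- (rsum_const0 N). apply rsum_lt.
    + intros j Hj. destruct (x i j); [left; now apply link_load_pos | lra].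
    + exists j0. split; [assumption |]. rewrite Hxij0. now apply link_load_pos.
  - intros rho a Hrho Ha. unfold Iprime. rewrite <- rsum_scal. apply rsum_lt.
    + intros j Hj. destruct (x i j) eqn:Hxij; [left; now apply link_load_lt_scaled | lra].
    + exists j0. split; [assumption |]. rewrite Hxij0. now apply link_load_lt_scaled.
  - intros r1 r2 H1 H2 Hle. apply rsum_le. intros j Hj.
    destruct (x i j) eqn:Hxij; [now apply link_load_le | lra].
Qed.

End LoadCoupling.

Theorem mainTheorem4 (M N : nat) (d : nat -> R) (x : nat -> nat -> bool)
  (g : nat -> nat -> R) (P : nat -> R) (sigma2 K B eta wbar : R)
  (Hd : forall j, (j < N)%nat -> 0 < d j)
  (Hx : forall i, (i < M)%nat -> exists j, (j < N)%nat /\ x i j = true)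
  (Hg : forall i j, (i < M)%nat -> (j < N)%nat -> 0 <= g i j)
  (Hgx : forall i j, (i < M)%nat -> (j < N)%nat -> x i j = true -> 0 < g i j)
  (HP : forall i, (i < M)%nat -> 0 < P i)
  (Hsigma2 : 0 < sigma2) (HK : 0 < K) (HB : 0 < B) (Heta : 0 < eta) (Hwbar : 0 < wbar) :
  let J := Isecond M N d x g P sigma2 K B eta wbar in
  (forall i, (i < M)%nat -> standard_interference_function M (J i)) /\
  (forall rho, nonneg_vec M rho -> forall i, (i < M)%nat -> J i rho <= 1) /\
  (exists rhostar : nat -> R,
     nonneg_vec M rhostar /\
     (forall i, (i < M)%nat -> rhostar i = J i rhostar) /\
     (forall rho, nonneg_vec M rho ->
        (forall i, (i < M)%nat -> rho i = J i rho) ->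
        forall i, (i < M)%nat -> rho i = rhostar i) /\
     (forall i, (i < M)%nat -> 0 < rhostar i <= 1)).
Proof.
  intros J.
  assert (J_standard : forall i, (i < M)%nat -> standard_interference_function M (J i)).
  { intros i Hi. apply standard_interference_Rmin; [lra |]. now apply Iprime_standard. }
  assert (J_box : forall i rho, 0 <= J i rho <= 1).
  { intros i rho. split; [apply Rmin_glb; [now apply Iprime_nonneg | lra] | apply Rmin_r]. }
  destruct (monotone_box_fixpoint M J 1) as [rs [rs_box rs_fix]]; [| assumption |].
  { intros i Hi. apply J_standard, Hi. }
  assert (rs_fixpoint : is_fixpoint M J rs) by (split; [intros l _; apply rs_box | assumption]).
  split; [assumption | split; [intros rho _ i _; apply J_box |]].
  exists rs. split; [apply rs_fixpoint | split; [assumption | split]].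
  - intros rho Hrho Hfix. now apply (fixpoint_unique M J J_standard rs rho).
  - intros i Hi. split; [| apply rs_box].
    rewrite rs_fix by assumption. apply J_standard; [assumption | apply rs_fixpoint].
Qed.
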